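(* Let $\omega,\gamma_+,\gamma_-,\gamma_z\in\mathbb{R}$ and let $\mathcal{L}^\ddagger:\mathcal{M}_2\to\mathcal{M}_2$ be $$\mathcal{L}^\ddagger(X)=\tfrac{i\omega}{2}[\sigma_z,X]+\gamma_+\Big(\sigma_-X\sigma_+-\tfrac12\{\sigma_-\sigma_+,X\}\Big)+\gamma_-\Big(\sigma_+X\sigma_--\tfrac12\{\sigma_+\sigma_-,X\}\Big)+\gamma_z(\sigma_zX\sigma_z-X).$$ Then $\mathcal{L}^\ddagger(X^2)-\mathcal{L}^\ddagger(X)X-X\mathcal{L}^\ddagger(X)\ge 0$ for all Hermitian $X\in\mathcal{M}_2$ if and only if $\gamma_\pm\ge 0$ and $\sqrt{\gamma_+\gamma_-}+2\gamma_z\ge 0$.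
   Context: $\sigma_x,\sigma_y,\sigma_z$ are the Pauli matrices, $\sigma_\pm=\frac12(\sigma_x\pm i\sigma_y)$, $[A,B]=AB-BA$, $\{A,B\}=AB+BA$; $\ge 0$ means positive semidefinite. *)

From HB Require Import structures.
From mathcomp Require Import all_boot all_order all_algebra.
From mathcomp Require Import complex.
Set Implicit Arguments. Unset Strict Implicit. Unset Printing Implicit Defensive.
Import Order.TTheory GRing.Theory Num.Theory.
Local Open Scope ring_scope.
Local Open Scope complex_scope.

Section Pauli.
Variable R : rcfType.
Local Notation C := (R[i]).

Definition sigma_x : 'M[C]_2 :=
  \matrix_(i < 2, j < 2) (if i != j then 1 else 0).
Definition sigma_y : 'M[C]_2 :=
  \matrix_(i < 2, j < 2)
    (if (i == 0%N :> nat) && (j == 1%N :> nat) then - 'i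
     else if (i == 1%N :> nat) && (j == 0%N :> nat) then 'i else 0).
Definition sigma_z : 'M[C]_2 :=
  \matrix_(i < 2, j < 2)
    (if i == j then (if i == 0%N :> nat then 1 else -1) else 0).
Definition sigma_p : 'M[C]_2 := 2^-1 *: (sigma_x + 'i *: sigma_y).
Definition sigma_m : 'M[C]_2 := 2^-1 *: (sigma_x - 'i *: sigma_y).

Definition comm (A B : 'M[C]_2) := A * B - B * A.
Definition acomm (A B : 'M[C]_2) := A * B + B * A.

Definition adjm (A : 'M[C]_2) : 'M[C]_2 := map_mx conjc A^T.
Definition is_hermitian (A : 'M[C]_2) := adjm A = A.
(* positive semidefinite: v^* A v >= 0 for all v (in the partial order of C) *)
Definition is_psd (A : 'M[C]_2) :=
  forall v : 'cV[C]_2, 0 <= ((map_mx conjc v)^T *m A *m v) 0 0.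

Definition Ldag (w gp gm gz : R) (X : 'M[C]_2) : 'M[C]_2 :=
  (('i * w%:C) / 2) *: comm sigma_z X
  + gp%:C *: (sigma_m * X * sigma_p - 2^-1 *: acomm (sigma_m * sigma_p) X)
  + gm%:C *: (sigma_p * X * sigma_m - 2^-1 *: acomm (sigma_p * sigma_m) X)
  + gz%:C *: (sigma_z * X * sigma_z - X).
End Pauli.

(* For Hermitian X = [[a, b], [b^*, d]] the matrix
   D(X) = L(X^2) - L(X) X - X L(X) is Hermitian with diagonal
   k|b|^2 + g_- (d-a)^2, k|b|^2 + g_+ (d-a)^2 (where k = g_+ + g_- + 4 g_z) and
   off-diagonal entry (g_+ - g_-)(d-a) b; the frequency w drops out.  Being
   positive semidefinite is then a condition on t = (d-a)^2 >= 0 and m = |b|^2 >= 0,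
   and with rho = sqrt(g_+ g_-) the determinant condition rewrites as
     (k m - rho t)^2 + 2 (rho + 2 g_z)(g_+ + g_- + 2 rho) m t >= 0.
   This holds for all t, m >= 0 iff rho + 2 g_z >= 0 (test t = k, m = rho). *)

From HB Require Import structures.
From mathcomp Require Import all_boot all_order all_algebra.
From mathcomp Require Import complex.
From mathcomp Require Import ring lra.
Set Implicit Arguments. Unset Strict Implicit. Unset Printing Implicit Defensive.
Import Order.TTheory GRing.Theory Num.Theory.
Local Open Scope ring_scope.
Local Open Scope complex_scope.

Section RealForms.
Variable R : rcfType.

Lemma ge0_affine_slope (a c : R) : (forall m, 0 <= m -> 0 <= a + c * m) -> 0 <= c.
Proof.
move=> H; rewrite leNgt; apply/negP => hc.
have hm : 0 <= (`|a| + 1) / - c by rewrite divr_ge0 ?addr_ge0 // oppr_ge0 ltW.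
have := H _ hm; rewrite mulrCA invrN mulrN mulfV ?lt_eqF // mulrN1.
have := ler_norm a; lra.
Qed.

Lemma binary_form_discr (A B C : R) :
  (forall p q, 0 <= A * p ^+ 2 + 2 * B * p * q + C * q ^+ 2) -> B ^+ 2 <= A * C.
Proof.
move=> H.
have hA : 0 <= A by have := H 1 0; congr (_ <= _); ring.
have hC : 0 <= C by have := H 0 1; congr (_ <= _); ring.
rewrite -subr_ge0; set d := A * C - B ^+ 2.
have [A0|] := ltP 0 A.
  by rewrite -(pmulr_rge0 _ A0); have := H B (- A); congr (_ <= _); rewrite /d; ring.
have [C0 A0|] := ltP 0 C.
  by rewrite -(pmulr_rge0 _ C0); have := H (- C) B; congr (_ <= _); rewrite /d; ring.
move=> C0 A0; have := H 1 (- B); rewrite /d; nra.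
Qed.

End RealForms.

Section Dissipation.
Variables (R : rcfType) (gp gm gz : R).
Local Notation rho := (Num.sqrt (gp * gm)).
Local Notation k := (gp + gm + 4 * gz).

Definition dissipation_ok (t m : R) :=
  [/\ 0 <= k * m + gm * t, 0 <= k * m + gp * t
    & (gp - gm) ^+ 2 * t * m <= (k * m + gm * t) * (k * m + gp * t)].

Lemma dissipation_gapE t m : 0 <= gp -> 0 <= gm ->
  (k * m + gm * t) * (k * m + gp * t) - (gp - gm) ^+ 2 * t * m =
  (k * m - rho * t) ^+ 2 + 2 * (rho + 2 * gz) * (gp + gm + 2 * rho) * m * t.
Proof.
move=> hp hm; have hrho : rho ^+ 2 = gp * gm by rewrite sqr_sqrtr ?mulr_ge0.
apply/eqP; rewrite -subr_eq0; apply/eqP.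
transitivity ((gp * gm - rho ^+ 2) * (t ^+ 2 + 4 * m * t)); first by ring.
by rewrite hrho subrr mul0r.
Qed.

Lemma sqrt_mul_le_mean : 0 <= gp -> 0 <= gm -> 2 * rho <= gp + gm.
Proof.
move=> hp hm; rewrite sqrtrM // -{2}(sqr_sqrtr hp) -{2}(sqr_sqrtr hm).
have := sqr_ge0 (Num.sqrt gp - Num.sqrt gm); rewrite sqrrB; lra.
Qed.

Lemma dissipation_ok_sufficient t m :
  0 <= gp -> 0 <= gm -> 0 <= rho + 2 * gz -> 0 <= t -> 0 <= m ->
  dissipation_ok t m.
Proof.
move=> hp hm hc ht hm0.
have hk : 0 <= k by have := sqrt_mul_le_mean hp hm; lra.
have hgap := dissipation_gapE t m hp hm.
have hsq := sqr_ge0 (k * m - rho * t).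
have hprod : 0 <= (rho + 2 * gz) * (gp + gm + 2 * rho) * m * t.
  by rewrite !mulr_ge0 // addr_ge0 ?addr_ge0 ?mulr_ge0 ?sqrtr_ge0.
split; [nra | nra | lra].
Qed.

Lemma dissipation_ok_necessary :
  (forall t m, 0 <= t -> 0 <= m -> dissipation_ok t m) ->
  [/\ 0 <= gp, 0 <= gm & 0 <= rho + 2 * gz].
Proof.
move=> H.
have [] := H 1 0 ler01 (lexx 0); rewrite !mulr0 !add0r !mulr1 => hm hp _.
have [] := H 0 1 (lexx 0) ler01; rewrite mulr0 addr0 mulr1 => hk _ _.
have hrho := sqrtr_ge0 (gp * gm).
pose c := (rho + 2 * gz) * (gp + gm + 2 * rho).
have gap_ge0 t m : 0 <= t -> 0 <= m -> 0 <= (k * m - rho * t) ^+ 2 + 2 * c * m * t.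
  move=> ht hm0; rewrite /c mulrA -dissipation_gapE //.
  by have [_ _] := H t m ht hm0; rewrite subr_ge0.
have hc : 0 <= c.
  have [k0|kneq0] := eqVneq k 0.
    rewrite -(pmulr_rge0 _ (ltr0n R 2)); apply: (@ge0_affine_slope R (rho ^+ 2)) => x hx.
    by have := gap_ge0 1 x ler01 hx; rewrite k0; congr (_ <= _); ring.
  have [rho0|rhoneq0] := eqVneq rho 0.
    rewrite -(pmulr_rge0 _ (ltr0n R 2)); apply: (@ge0_affine_slope R (k ^+ 2)) => x hx.
    by have := gap_ge0 x 1 hx ler01; rewrite rho0; congr (_ <= _); ring.
  have hkrho : 0 < 2 * (rho * k) by rewrite !mulr_gt0 // lt0r ?kneq0 ?rhoneq0.
  rewrite -(pmulr_lge0 _ hkrho).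
  by have := gap_ge0 k rho hk hrho; congr (_ <= _); ring.
split=> //; have [hpos|] := ltP 0 (gp + gm + 2 * rho); first by rewrite -(pmulr_lge0 _ hpos).
lra.
Qed.
End Dissipation.

Section Matrices.
Variable R : rcfType.
Local Notation C := (R[i]).

Definition mx2 (a b c d : C) : 'M[C]_2 :=
  \matrix_(i < 2, j < 2) if i == 0 :> 'I_2 then (if j == 0 :> 'I_2 then a else b)
                        else (if j == 0 :> 'I_2 then c else d).

Definition cv2 (v0 v1 : C) : 'cV[C]_2 := \col_(i < 2) if i == 0 :> 'I_2 then v0 else v1.

Ltac mx2_entrywise := apply/matrixP=> -[[|[|//]] ?] -[[|[|//]] ?]; rewrite !mxE.

Lemma mx2_entries (X : 'M[C]_2) : X = mx2 (X 0 0) (X 0 1) (X 1 0) (X 1 1).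
Proof. by mx2_entrywise; congr (X _ _); apply: val_inj. Qed.

Lemma cv2_entries (v : 'cV[C]_2) : v = cv2 (v 0 0) (v 1 0).
Proof.
apply/matrixP=> i j; rewrite !mxE (ord1 j).
by case: i => [[|[|//]] ?] /=; congr (v _ _); apply: val_inj.
Qed.

Lemma mul_mx2 a b c d a' b' c' d' :
  mx2 a b c d * mx2 a' b' c' d' =
  mx2 (a * a' + b * c') (a * b' + b * d') (c * a' + d * c') (c * b' + d * d').
Proof.
rewrite -mulmxE; apply/matrixP=> i j; rewrite !mxE !big_ord_recr big_ord0 /= !mxE /=.
by case: i => [[|[|//]] ?]; case: j => [[|[|//]] ?] /=; rewrite add0r.
Qed.

Lemma add_mx2 a b c d a' b' c' d' :
  mx2 a b c d + mx2 a' b' c' d' = mx2 (a + a') (b + b') (c + c') (d + d').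
Proof. by mx2_entrywise. Qed.

Lemma opp_mx2 a b c d : - mx2 a b c d = mx2 (- a) (- b) (- c) (- d).
Proof. by mx2_entrywise. Qed.

Lemma scale_mx2 k a b c d : k *: mx2 a b c d = mx2 (k * a) (k * b) (k * c) (k * d).
Proof. by mx2_entrywise. Qed.

Lemma sigma_xE : sigma_x R = mx2 0 1 1 0.
Proof. by mx2_entrywise. Qed.

Lemma sigma_yE : sigma_y R = mx2 0 (- 'i) 'i 0.
Proof. by mx2_entrywise. Qed.

Lemma sigma_zE : sigma_z R = mx2 1 0 0 (- 1).
Proof. by mx2_entrywise. Qed.

Lemma sigma_pE : sigma_p R = mx2 0 1 0 0.
Proof.
rewrite /sigma_p sigma_xE sigma_yE !scale_mx2 add_mx2 !scale_mx2.
have i2 : 'i * 'i = -1 :> C by rewrite -expr2 sqr_i.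
by congr mx2; rewrite ?mulrN ?i2; field.
Qed.

Lemma sigma_mE : sigma_m R = mx2 0 0 1 0.
Proof.
rewrite /sigma_m sigma_xE sigma_yE !scale_mx2 opp_mx2 add_mx2 !scale_mx2.
have i2 : 'i * 'i = -1 :> C by rewrite -expr2 sqr_i.
by congr mx2; rewrite ?mulrN ?i2; field.
Qed.

Definition dissipator (w gp gm gz : R) (X : 'M[C]_2) : 'M[C]_2 :=
  Ldag w gp gm gz (X * X) - Ldag w gp gm gz X * X - X * Ldag w gp gm gz X.

Lemma dissipator_mx2 w gp gm gz a b c d :
  dissipator w gp gm gz (mx2 a b c d) =
  mx2 (gp%:C * (b * c) + gm%:C * (b * c + (d - a) ^+ 2) + 4 * gz%:C * (b * c))
      ((gp%:C - gm%:C) * (d - a) * b) ((gp%:C - gm%:C) * (d - a) * c)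
      (gp%:C * ((d - a) ^+ 2 + b * c) + gm%:C * (b * c) + 4 * gz%:C * (b * c)).
Proof.
rewrite /dissipator /Ldag /comm /acomm sigma_zE sigma_pE sigma_mE.
rewrite !(mul_mx2, opp_mx2, add_mx2, scale_mx2).
by congr mx2; field.
Qed.

Definition hermmx2 (a d x y : R) : 'M[C]_2 := mx2 a%:C (x +i* y) (x +i* - y) d%:C.

Lemma dissipator_hermmx2 w gp gm gz a d x y :
  dissipator w gp gm gz (hermmx2 a d x y) =
  hermmx2 ((gp + gm + 4 * gz) * (x ^+ 2 + y ^+ 2) + gm * (d - a) ^+ 2)
          ((gp + gm + 4 * gz) * (x ^+ 2 + y ^+ 2) + gp * (d - a) ^+ 2)
          ((gp - gm) * (d - a) * x) ((gp - gm) * (d - a) * y).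
Proof.
rewrite dissipator_mx2; congr mx2;
  by apply/eqP; rewrite eq_complex /=; apply/andP; split; apply/eqP; ring.
Qed.

Lemma hermmx2_hermitian a d x y : is_hermitian (hermmx2 a d x y).
Proof. by rewrite /is_hermitian /adjm; mx2_entrywise; rewrite /= ?oppr0 ?opprK. Qed.

Lemma hermitianE X : is_hermitian X ->
  X = hermmx2 (complex.Re (X 0 0)) (complex.Re (X 1 1)) (complex.Re (X 0 1)) (complex.Im (X 0 1)).
Proof.
move=> hX; have adjE i j : X i j = (X j i)^* by rewrite -{1}hX /adjm !mxE.
have realE i : X i i = (complex.Re (X i i))%:C.
  by move: (adjE i i); case: (X i i) => u v [] /eqP; rewrite -subr_eq0 opprK -mulr2n mulrn_eq0 => /eqP->.
rewrite {1}(mx2_entries X) /hermmx2 -realE -realE (adjE 1 0).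
by case: (X 0 1).
Qed.

Definition qform (M : 'M[C]_2) (v : 'cV[C]_2) : C := ((map_mx conjc v)^T *m M *m v) 0 0.

Lemma qform_hermmx2 a d x y p q r s :
  qform (hermmx2 a d x y) (cv2 (p +i* q) (r +i* s)) =
  (a * (p ^+ 2 + q ^+ 2) + d * (r ^+ 2 + s ^+ 2)
   + 2 * (x * (p * r + q * s) - y * (p * s - q * r)))%:C.
Proof.
rewrite /qform !mxE !big_ord_recr !big_ord0 /= !mxE !big_ord_recr !big_ord0 /= !mxE /=.
apply/eqP; rewrite eq_complex /=; apply/andP; split; apply/eqP; ring.
Qed.

Lemma psd_hermmx2 a d x y :
  is_psd (hermmx2 a d x y) <-> [/\ 0 <= a, 0 <= d & x ^+ 2 + y ^+ 2 <= a * d].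
Proof.
split=> [hpsd | [ha hd hxy] v].
  have qf p q r s : 0 <= a * (p ^+ 2 + q ^+ 2) + d * (r ^+ 2 + s ^+ 2)
                         + 2 * (x * (p * r + q * s) - y * (p * s - q * r)).
    have := (hpsd (cv2 (p +i* q) (r +i* s)) : 0 <= qform (hermmx2 a d x y) _).
    by rewrite qform_hermmx2 ler0c.
  have ha : 0 <= a by have := qf 1 0 0 0; congr (_ <= _); ring.
  have hd : 0 <= d by have := qf 0 0 1 0; congr (_ <= _); ring.
  split=> //; set m := x ^+ 2 + y ^+ 2.
  have hm : 0 <= m by rewrite addr_ge0 ?sqr_ge0.
  have had : 0 <= a * d by rewrite mulr_ge0.
  have : (- m) ^+ 2 <= a * (d * m).
    by apply: binary_form_discr => p q; have := qf p 0 (- (q * x)) (q * y); congr (_ <= _); rewrite /m; ring.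
  nra.
rewrite (cv2_entries v); case: (v 0 0) => p q; case: (v 1 0) => r s.
rewrite -[X in 0 <= X]/(qform _ _) qform_hermmx2 ler0c.
set P := p ^+ 2 + q ^+ 2; set Q := r ^+ 2 + s ^+ 2.
set Z := x * (p * r + q * s) - y * (p * s - q * r).
have hP : 0 <= P by rewrite addr_ge0 ?sqr_ge0.
have hQ : 0 <= Q by rewrite addr_ge0 ?sqr_ge0.
have lagrange : Z ^+ 2 + (x * (p * s - q * r) + y * (p * r + q * s)) ^+ 2 = (x ^+ 2 + y ^+ 2) * (P * Q).
  by rewrite /Z /P /Q; ring.
have hZ : Z ^+ 2 <= a * d * (P * Q).
  have := sqr_ge0 (x * (p * s - q * r) + y * (p * r + q * s)).
  have := ler_wpM2r (mulr_ge0 hP hQ) hxy; lra.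
have hS : 0 <= a * P + d * Q by rewrite addr_ge0 ?mulr_ge0.
have := sqr_ge0 (a * P - d * Q); nra.
Qed.

Lemma psd_dissipator_hermmx2 w gp gm gz a d x y :
  is_psd (dissipator w gp gm gz (hermmx2 a d x y))
  <-> dissipation_ok gp gm gz ((d - a) ^+ 2) (x ^+ 2 + y ^+ 2).
Proof.
rewrite dissipator_hermmx2 psd_hermmx2 /dissipation_ok.
have -> : ((gp - gm) * (d - a) * x) ^+ 2 + ((gp - gm) * (d - a) * y) ^+ 2
        = (gp - gm) ^+ 2 * (d - a) ^+ 2 * (x ^+ 2 + y ^+ 2) by ring.
done.
Qed.
End Matrices.

Theorem mainTheorem7 (R : rcfType) (w gp gm gz : R) :
  (forall X : 'M[complex R]_2, is_hermitian X ->
     is_psd (Ldag w gp gm gz (X * X) - Ldag w gp gm gz X * X - X * Ldag w gp gm gz X))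
  <-> (0 <= gp /\ 0 <= gm /\ 0 <= Num.sqrt (gp * gm) + 2 * gz).
Proof.
split=> [H | [hp [hm hc]] X /hermitianE ->].
  suff /dissipation_ok_necessary[] : forall t m, 0 <= t -> 0 <= m -> dissipation_ok gp gm gz t m by [].
  move=> t m ht hm.
  have := H _ (hermmx2_hermitian 0 (Num.sqrt t) (Num.sqrt m) 0).
  by rewrite -/(dissipator _ _ _ _ _) psd_dissipator_hermmx2 subr0 !sqr_sqrtr // expr0n addr0.
rewrite -/(dissipator _ _ _ _ _); apply/psd_dissipator_hermmx2.
apply: dissipation_ok_sufficient => //; [exact: sqr_ge0 | by rewrite addr_ge0 ?sqr_ge0].
Qed.
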